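(* Let $H$ be a connected chordal graph on vertex set $\{v_1,\dots,v_n\}$ and let $v_1\prec\cdots\prec v_n$ be a perfect elimination ordering of $H$. For every $i\geq2$ such that $v_i$ has an outgoing neighbour, let $\nu(v_i)$ be the last (with respect to $\prec$) outgoing neighbour of $v_i$. Then the graph $T_\prec(H)$ on $V(H)$ whose edges are all pairs $\{v_i,\nu(v_i)\}$ is a spanning tree of $H$. Moreover, any ordering of $V(H)$ in which vertices farther from $v_1$ in $T_\prec(H)$ come later is a perfect elimination ordering of $H$.
   Context: A graph is chordal if it contains no induced cycle of length at least 4. An ordering $v_1\prec\cdots\prec v_n$ of the vertices of a graph $H$ is a perfect elimination ordering if for every $i$ the set of outgoing neighbours of $v_i$, i.e. neighbours of $v_i$ among $v_1,\dots,v_{i-1}$, induces a clique in $H$. *)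

From mathcomp Require Import all_boot.
Set Implicit Arguments. Unset Strict Implicit. Unset Printing Implicit Defensive.

Definition simple_graph (T : finType) (e : rel T) : Prop :=
  symmetric e /\ irreflexive e.

Definition connected_graph (T : finType) (e : rel T) : Prop :=
  forall x y : T, connect e x y.

Definition is_cycle (T : finType) (e : rel T) (c : seq T) : Prop :=
  [/\ uniq c, 3 <= size c & cycle e c].

Definition is_induced_cycle (T : finType) (e : rel T) (c : seq T) : Prop :=
  [/\ is_cycle e c &
      forall x y, x \in c -> y \in c -> e x y -> y = next c x \/ y = prev c x].

Definition chordal (T : finType) (e : rel T) : Prop :=
  forall c : seq T, 4 <= size c -> ~ is_induced_cycle e c.

Definition acyclic (T : finType) (e : rel T) : Prop :=
  forall c : seq T, ~ is_cycle e c.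

(* A vertex ordering is given by an injective rank function r : T -> nat;
   u precedes v iff r u < r v. *)
Definition vertex_ordering (T : finType) (r : T -> nat) : Prop := injective r.

Definition outgoing (T : finType) (e : rel T) (r : T -> nat) (v u : T) : bool :=
  e v u && (r u < r v).

Definition clique (T : finType) (e : rel T) (A : pred T) : Prop :=
  forall x y, A x -> A y -> x != y -> e x y.

Definition perfect_elimination_ordering (T : finType) (e : rel T) (r : T -> nat)
  : Prop :=
  vertex_ordering r /\ forall v : T, clique e (outgoing e r v).

Definition last_outgoing (T : finType) (e : rel T) (r : T -> nat) (v u : T)
  : bool :=
  outgoing e r v u && [forall w, outgoing e r v w ==> (r w <= r u)].

Definition elim_tree (T : finType) (e : rel T) (r : T -> nat) : rel T :=
  fun x y => last_outgoing e r x y || last_outgoing e r y x.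

Definition spanning_tree (T : finType) (e t : rel T) : Prop :=
  [/\ simple_graph t, subrel t e, connected_graph t & acyclic t].

(* walk of length (number of edges) size p from x to y *)
Definition walk (T : finType) (e : rel T) (x y : T) (p : seq T) : Prop :=
  path e x p /\ last x p = y.

Definition is_dist (T : finType) (e : rel T) (x y : T) (k : nat) : Prop :=
  (exists p, walk e x y p /\ size p = k) /\
  (forall p, walk e x y p -> k <= size p).

From mathcomp Require Import all_boot.
Set Implicit Arguments. Unset Strict Implicit. Unset Printing Implicit Defensive.

(* Write nu(v) for the last outgoing neighbour of v.  The argument rests on
   one consequence of the clique condition: every outgoing neighbour u of v
   other than nu(v) is an outgoing neighbour of nu(v) (outgoing_parent).

   1. Acyclicity needs only that nu is a function decreasing r: in a cycle the
      vertex of largest rank would have both cycle neighbours equal to its nu.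
   2. Existence of nu(v) for v <> v1: a path from v to a vertex of smaller
      rank can be shortened at any interior peak, since the two neighbours of
      the peak are outgoing neighbours of it, hence equal or adjacent
      (shortcut_peak); repeating this, the path eventually leaves v
      downwards, i.e. starts with an outgoing neighbour of v.
   3. Iterating nu from v reaches v1; the number of steps, the depth of v, is
      its distance from v1 in the tree, because tree edges change the depth by
      at most one.
   4. By outgoing_parent, outgoing neighbours have strictly smaller depth, so
      for an ordering by depth every outgoing neighbour of v is an outgoing
      neighbour for r; hence such an ordering is again perfect. *)

Section EliminationTree.
Variables (T : finType) (e : rel T) (r : T -> nat).
Hypotheses (e_sym : symmetric e) (e_irr : irreflexive e) (r_inj : injective r)
  (peo_clique : forall v, clique e (outgoing e r v)).

Lemma edge_rank_neq x y : e x y -> r x != r y.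
Proof. by move=> exy; apply/eqP=> /r_inj eq_xy; rewrite eq_xy e_irr in exy. Qed.

Lemma last_outgoing_max v u w :
  last_outgoing e r v u -> outgoing e r v w -> r w <= r u.
Proof. by case/andP=> _ /forallP/(_ w)/implyP. Qed.

Lemma last_outgoing_unique v u u' :
  last_outgoing e r v u -> last_outgoing e r v u' -> u = u'.
Proof.
move=> lo lo'; have /andP[ou _] := lo; have /andP[ou' _] := lo'.
apply: r_inj; apply/eqP; rewrite eqn_leq.
by rewrite (last_outgoing_max lo' ou) (last_outgoing_max lo ou').
Qed.

Lemma last_outgoing_lt v u : last_outgoing e r v u -> r u < r v.
Proof. by case/andP=> /andP[]. Qed.

Lemma outgoing_parent v w u :
  last_outgoing e r v w -> outgoing e r v u -> u != w -> outgoing e r w u.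
Proof.
move=> lo ou neq_uw; have ow : outgoing e r v w by case/andP: lo.
have euw : e u w := peo_clique ou ow neq_uw.
rewrite /outgoing e_sym euw ltn_neqAle edge_rank_neq //=.
exact: last_outgoing_max lo ou.
Qed.

(* A path can be shortened around an interior vertex z of maximal rank: the
   two neighbours of z on the path are outgoing neighbours of z, hence equal
   or adjacent. *)
Lemma shortcut_peak x p z :
  path e x p -> z \in p -> z != last x p -> {in x :: p, forall w, r w <= r z} ->
  exists q, [/\ path e x q, last x q = last x p & size q < size p].
Proof.
move=> px zp; case/splitPr: zp px => p1 p2.
rewrite cat_path last_cat /= => /and3P[p1p eaz p2p].
set a := last x p1 in eaz p2p *.
case: p2 p2p => [|b p3] /=; first by rewrite eqxx.
move=> /andP[ezb p3p] _ peak.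
have oa : outgoing e r z a.
  rewrite /outgoing e_sym eaz ltn_neqAle edge_rank_neq //=.
  by apply: peak; rewrite -cat_cons mem_cat mem_last.
have ob : outgoing e r z b.
  rewrite /outgoing ezb ltn_neqAle eq_sym edge_rank_neq //=.
  by apply: peak; rewrite -cat_cons mem_cat !inE eqxx !orbT.
case: (eqVneq a b) => [eq_ab | neq_ab].
  exists (p1 ++ p3); rewrite cat_path p1p /= -/a eq_ab p3p last_cat -/a eq_ab.
  by rewrite !size_cat /= ltn_add2l ltnS leqnSn.
exists (p1 ++ b :: p3); rewrite cat_path p1p /= -/a (peo_clique oa ob neq_ab).
by rewrite p3p last_cat !size_cat /= ltn_add2l.
Qed.

(* A vertex joined by a path to a vertex of smaller rank has an outgoing
   neighbour: shortcut peaks until the path leaves v downwards. *)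
Lemma lower_path_outgoing n v p :
  size p <= n -> path e v p -> r (last v p) < r v -> exists u, outgoing e r v u.
Proof.
elim: n v p => [|n IH] v [|u p] //=; try by rewrite ltnn.
rewrite ltnS => size_p /andP[evu up] low.
have [lt_uv | le_vu] := ltnP (r u) (r v); first by exists u; apply/andP.
have [z zp z_max] := @arg_maxnP _ u (mem (u :: p)) r (mem_head u p).
have peak : {in v :: u :: p, forall w, r w <= r z}.
  move=> w; rewrite in_cons => /predU1P[-> | /z_max //].
  exact: leq_trans le_vu (z_max u (mem_head u p)).
have z_last : z != last u p.
  apply: contraTneq low => <-; rewrite -leqNgt.
  exact: leq_trans le_vu (z_max u (mem_head u p)).
have vp : path e v (u :: p) by rewrite /= evu.
have [q [vq last_q size_q]] := shortcut_peak vp zp z_last peak.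
apply: (IH v q) => //; last by rewrite last_q.
by rewrite -ltnS (leq_trans size_q).
Qed.

Local Notation tree := (elim_tree e r).

Lemma elim_tree_sym : symmetric tree.
Proof. by move=> x y; rewrite /elim_tree orbC. Qed.

Lemma elim_tree_simple : simple_graph tree.
Proof.
split; first exact: elim_tree_sym.
by move=> x; rewrite /elim_tree /last_outgoing /outgoing ltnn !andbF.
Qed.

Lemma elim_tree_subrel : subrel tree e.
Proof. by move=> x y /orP[] /andP[] /andP[] //; rewrite e_sym. Qed.

Lemma elim_tree_edge_down x y : tree x y -> r y <= r x -> last_outgoing e r x y.
Proof.
case/orP=> // lo le_yx.
by have := leq_ltn_trans le_yx (last_outgoing_lt lo); rewrite ltnn.
Qed.

(* In a cycle, both cycle neighbours of the vertex of largest rank would be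
   its last outgoing neighbour. *)
Lemma elim_tree_acyclic : acyclic tree.
Proof.
move=> [|c0 c] [uniq_c size_c cycle_c] //.
have [x xc x_max] := @arg_maxnP _ c0 (mem (c0 :: c)) r (mem_head c0 c).
have [i s rot_c] := rot_to xc.
have : uniq (x :: s) by rewrite -rot_c rot_uniq.
have : 3 <= size (x :: s) by rewrite -rot_c size_rot.
have : cycle tree (x :: s) by rewrite -rot_c rot_cycle.
have peak w : w \in x :: s -> r w <= r x by rewrite -rot_c mem_rot => /x_max.
case: s rot_c peak => [|a [|d s]] // _ peak cycle_s _ uniq_s.
have a_notin : a \notin d :: s by move: uniq_s => /andP[_ /andP[]].
move: cycle_s; rewrite /= rcons_path => /and4P[txa _ _ tbx].
set b := last d s in tbx.
have b_in : b \in d :: s by apply: mem_last.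
have lo_a : last_outgoing e r x a.
  by apply: elim_tree_edge_down txa _; apply: peak; rewrite !inE eqxx orbT.
have lo_b : last_outgoing e r x b.
  apply: elim_tree_edge_down; first by rewrite elim_tree_sym.
  by apply: peak; rewrite in_cons in_cons b_in !orbT.
by move: a_notin; rewrite (last_outgoing_unique lo_a lo_b) b_in.
Qed.

Section Rooted.
Variable v1 : T.
Hypotheses (e_conn : connected_graph e) (v1_min : forall v, r v1 <= r v).

Lemma root_no_outgoing u : outgoing e r v1 u = false.
Proof. by rewrite /outgoing ltnNge v1_min andbF. Qed.

Lemma root_no_last_outgoing u : last_outgoing e r v1 u = false.
Proof. by rewrite /last_outgoing root_no_outgoing. Qed.

Lemma has_last_outgoing v : v != v1 -> exists u, last_outgoing e r v u.
Proof.
move=> neq_v; have /connectP[p vp last_p] := e_conn v v1.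
have [u0 ou0] : exists u, outgoing e r v u.
  apply: (lower_path_outgoing (leqnn (size p)) vp).
  rewrite -last_p ltn_neqAle v1_min andbT.
  by apply: contra neq_v => /eqP/r_inj->.
have [u ou u_max] := arg_maxnP r ou0.
by exists u; apply/andP; split=> //; apply/forallP=> w; apply/implyP/u_max.
Qed.

Inductive depth : T -> nat -> Prop :=
| depth_root : depth v1 0
| depth_step v u k : last_outgoing e r v u -> depth u k -> depth v k.+1.

(* The root has depth 0 and nu is a function, so depths are unique. *)
Lemma depth_unique v k k' : depth v k -> depth v k' -> k = k'.
Proof.
move=> dv; elim: dv k' => [|x u m lo _ IH] k' dv';
  inversion dv' as [eq_v1 | y w m' lo' dw eq_y].
- done.
- by rewrite root_no_last_outgoing in lo'.
- by rewrite -eq_v1 root_no_last_outgoing in lo.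
- by rewrite (IH m') // (last_outgoing_unique lo lo').
Qed.

(* Every vertex has a depth: nu strictly decreases the rank. *)
Lemma depth_exists v : exists k, depth v k.
Proof.
have [n lt_vn] : exists n, r v < n by exists (r v).+1.
elim: n v lt_vn => [|n IH] v // lt_vn.
have [-> | neq_v] := eqVneq v v1; first by exists 0; apply: depth_root.
have [u lo] := has_last_outgoing neq_v.
have [k du] := IH u (leq_trans (last_outgoing_lt lo) lt_vn).
by exists k.+1; apply: depth_step lo du.
Qed.

Lemma elim_tree_depth x y kx ky : tree x y -> depth x kx -> depth y ky -> ky <= kx.+1.
Proof.
case/orP=> lo dx dy.
  by rewrite (depth_unique dx (depth_step lo dy)) leqW.
by rewrite (depth_unique dy (depth_step lo dx)).
Qed.

Lemma walk_depth_bound p x y kx ky :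
  walk tree x y p -> depth x kx -> depth y ky -> ky <= kx + size p.
Proof.
elim: p x kx => [|z p IH] x kx [/= xp last_p] dx dy.
  by rewrite -last_p in dy; rewrite (depth_unique dy dx) addn0.
case/andP: xp => txz zp; have [kz dz] := depth_exists z.
rewrite /= addnS -addSn (leq_trans (IH z kz (conj zp last_p) dz dy)) //.
by rewrite leq_add2r (elim_tree_depth txz dx dz).
Qed.

Lemma depth_walk v k : depth v k -> exists p, walk tree v1 v p /\ size p = k.
Proof.
elim=> [|x u m lo _ [p [[up last_p] size_p]]]; first by exists [::].
exists (rcons p x); rewrite /walk rcons_path up last_p last_rcons size_rcons size_p.
by rewrite /elim_tree lo orbT.
Qed.

Lemma depth_dist v k : depth v k -> is_dist tree v1 v k.
Proof.
move=> dv; split; first exact: depth_walk.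
by move=> p walk_p; apply: walk_depth_bound walk_p depth_root dv.
Qed.

Lemma elim_tree_connected : connected_graph tree.
Proof.
have from_root y : connect tree v1 y.
  have [k dy] := depth_exists y; have [p [[yp last_p] _]] := depth_walk dy.
  by apply/connectP; exists p; rewrite ?last_p.
move=> x y; apply: connect_trans (from_root y).
by rewrite (sym_connect_sym elim_tree_sym).
Qed.

(* Outgoing neighbours are strictly shallower: either u = nu(v), or u is an
   outgoing neighbour of nu(v) (outgoing_parent) and we recurse. *)
Lemma outgoing_depth_lt v u kv ku :
  outgoing e r v u -> depth v kv -> depth u ku -> ku < kv.
Proof.
move=> ou dv; elim: dv u ku ou => [|x w m lo dw IH] u ku ou du.
  by rewrite root_no_outgoing in ou.
have [eq_uw | neq_uw] := eqVneq u w.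
  by rewrite eq_uw in du; rewrite (depth_unique du dw).
exact: ltnW (IH u ku (outgoing_parent lo ou neq_uw) du).
Qed.

(* Any ordering consistent with depth in the elimination tree is perfect:
   its outgoing neighbours are outgoing for r as well, hence form a clique. *)
Lemma depth_ordering_peo r' : vertex_ordering r' ->
  (forall x y kx ky, is_dist tree v1 x kx -> is_dist tree v1 y ky ->
     kx < ky -> r' x < r' y) ->
  perfect_elimination_ordering e r'.
Proof.
move=> r'_inj r'_depth; split=> // x y z.
have out_r w : outgoing e r' x w -> outgoing e r x w.
  case/andP=> exw lt'_wx; rewrite /outgoing exw ltn_neqAle eq_sym edge_rank_neq //=.
  rewrite leqNgt; apply/negP=> lt_xw.
  have [kx dx] := depth_exists x; have [kw dw] := depth_exists w.
  have ow : outgoing e r w x by rewrite /outgoing e_sym exw.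
  have := r'_depth _ _ _ _ (depth_dist dx) (depth_dist dw) (outgoing_depth_lt ow dw dx).
  by rewrite ltnNge ltnW.
by move=> /out_r oy /out_r oz; apply: peo_clique oy oz.
Qed.

End Rooted.

End EliminationTree.

Theorem mainTheorem6 (T : finType) (e : rel T) (r : T -> nat) (v1 : T) :
  simple_graph e -> connected_graph e -> chordal e ->
  perfect_elimination_ordering e r ->
  (forall v, r v1 <= r v) ->
  spanning_tree e (elim_tree e r) /\
  (forall r' : T -> nat, vertex_ordering r' ->
     (forall x y kx ky, is_dist (elim_tree e r) v1 x kx ->
        is_dist (elim_tree e r) v1 y ky -> kx < ky -> r' x < r' y) ->
     perfect_elimination_ordering e r').
Proof.
move=> [e_sym e_irr] e_conn _ [r_inj peo_clique] v1_min.
split; last exact: depth_ordering_peo.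
split.
- exact: elim_tree_simple.
- exact: elim_tree_subrel.
- exact: elim_tree_connected e_sym e_irr r_inj peo_clique v1 e_conn v1_min.
- exact: elim_tree_acyclic.
Qed.
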